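(* If $\tilde w\in\widetilde W$ satisfies $\tilde w\alpha>0$ for all $\alpha\in\Delta(L)$, then $L\cap\tilde w^{-1}I^-\tilde w=B_L^-$.
   Context: $k$ a field, $G=\mathrm{GL}_n$, $s$ a variable; $I^-=\{g\in\mathrm{GL}_n(k[s^{-1}]):g|_{s^{-1}=0}\text{ lower triangular}\}$, $I\subset\mathrm{GL}_n(k[[s]])$ the preimage of upper triangular matrices. Affine roots $\alpha_{ij}+r$ have root subgroups $\{1+as^rE_{ij}\}$; an affine root is positive ($>0$) if its root subgroup lies in $I$. $\widetilde W$ = monomial matrices $w\,\mathrm{diag}(s^{\lambda_i})$, acting on affine roots by conjugation. Fix $1\le d\le n$. $L\subset\mathrm{GL}_n(k((s)))$ is the subgroup generated by the diagonal torus $T(k)$ and the root subgroups $\{1+as^{(i-j)/d}E_{ij}\}$, $i\equiv j\bmod d$, $i\ne j$ (isomorphic to $\{g\in\mathrm{GL}_n(k):g_{ij}=0\text{ unless }i\equiv j\bmod d\}$ via $s^{(i-j)/d}E_{ij}\mapsto E_{ij}$). $\Delta(L)=\{\alpha_{i,i+d}-1:1\le i\le n-d\}$ is its set of simple affine roots, and $B_L^-$ is the subgroup of $L$ generated by $T(k)$ and the root subgroups of $L$ with $i>j$. *)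

From HB Require Import structures.
From mathcomp Require Import all_boot all_order all_algebra all_fingroup.
From mathcomp Require Import fraction.
Set Implicit Arguments. Unset Strict Implicit. Unset Printing Implicit Defensive.
Import Order.TTheory GRing.Theory Num.Theory.
Local Open Scope ring_scope.

(* The field k(s) of rational functions in s; it contains k[s,s^-1] and
   k[s^-1], and all groups considered below live in GL_n(k(s)) inside
   GL_n(k((s))). *)
Notation "x %:F" := (@FracField.tofrac _ x).
Definition Ks (k : fieldType) := {fraction {poly k}}.

Definition cst (k : fieldType) (a : k) : Ks k := (a%:P)%:F.
Definition svar (k : fieldType) : Ks k := ('X : {poly k})%:F.

(* root subgroup element 1 + a s^r E_ij of the affine root alpha_ij + r *)
Definition rootel (k : fieldType) (n : nat) (i j : 'I_n) (r : int) (a : k)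
  : 'M[Ks k]_n := 1%:M + (cst a * svar k ^ r) *: delta_mx i j.

Definition wtil (k : fieldType) (n : nat) (w : 'S_n) (lam : 'I_n -> int)
  : 'M[Ks k]_n := perm_mx w *m diag_mx (\row_i (svar k ^ lam i)).

Definition conjm (k : fieldType) (n : nat) (x g : 'M[Ks k]_n) : 'M[Ks k]_n :=
  x *m g *m invmx x.

(* I^- = { g in GL_n(k[s^-1]) : g|_{s^-1=0} lower triangular }.  An element
   of k[s^-1] is p(s^-1) for p in k[t]. *)
Definition evinv (k : fieldType) (p : {poly k}) : Ks k :=
  (map_poly (@cst k) p).[(svar k)^-1].
Definition Iminus (k : fieldType) (n : nat) (g : 'M[Ks k]_n) : Prop :=
  exists P : 'M[{poly k}]_n,
    [/\ P \in unitmx, g = map_mx (@evinv k) P &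
        forall i j : 'I_n, (i < j)%N -> (P i j)`_0 = 0].

(* I intersected with M_n(k[s]): g in M_n(k[s]) whose reduction at s = 0 is
   invertible and upper triangular (this suffices for testing
   whether a root subgroup lies in I). *)
Definition Iplus (k : fieldType) (n : nat) (g : 'M[Ks k]_n) : Prop :=
  exists P : 'M[{poly k}]_n,
    [/\ g = map_mx (fun p => p%:F) P,
        map_mx (fun p : {poly k} => p`_0) P \in unitmx &
        forall i j : 'I_n, (j < i)%N -> (P i j)`_0 = 0].

(* wt (alpha_ij + r) > 0 : the root subgroup of wt(alpha), which is
   wt U_alpha wt^-1, lies in I *)
Definition wpos (k : fieldType) (n : nat) (x : 'M[Ks k]_n) (i j : 'I_n) (r : int)
  : Prop := forall a : k, Iplus (conjm x (rootel i j r a)).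

Inductive gen (k : fieldType) (n : nat) (S : 'M[Ks k]_n -> Prop)
  : 'M[Ks k]_n -> Prop :=
| gen_one : gen S 1%:M
| gen_in g : S g -> gen S g
| gen_mul g h : gen S g -> gen S h -> gen S (g *m h)
| gen_inv g : gen S g -> gen S (invmx g).

Definition torus (k : fieldType) (n : nat) (g : 'M[Ks k]_n) : Prop :=
  exists t : 'I_n -> k, (forall i, t i != 0) /\ g = diag_mx (\row_i cst (t i)).

Definition Lexp (d : nat) (n : nat) (i j : 'I_n) : int :=
  ((i%:Z - j%:Z) %/ d%:Z)%Z.

Definition Lgens (k : fieldType) (n d : nat) (g : 'M[Ks k]_n) : Prop :=
  torus g \/ exists (i j : 'I_n) (a : k),
    [/\ i != j, (i == j %[mod d])%N & g = rootel i j (Lexp d i j) a].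

Definition BLgens (k : fieldType) (n d : nat) (g : 'M[Ks k]_n) : Prop :=
  torus g \/ exists (i j : 'I_n) (a : k),
    [/\ (j < i)%N, (i == j %[mod d])%N & g = rootel i j (Lexp d i j) a].

Definition Lgrp (k : fieldType) (n d : nat) := gen (@Lgens k n d).
Definition BLminus (k : fieldType) (n d : nat) := gen (@BLgens k n d).

From HB Require Import structures.
From mathcomp Require Import all_boot all_order all_algebra all_fingroup.
From mathcomp Require Import fraction zify ring.
Set Implicit Arguments. Unset Strict Implicit. Unset Printing Implicit Defensive.
Import Order.TTheory GRing.Theory Num.Theory.
Local Open Scope ring_scope.

(* An element of L is [Lmx d C] for some C in GL_n(k) supported on the pairs
   i = j mod d, and conjugation by wt puts C_ij s^((i-j)/d) at position
   (w^-1 i, w^-1 j) with the exponent level i j = lam_i - lam_j + i/d - j/d.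
   Telescoping the hypothesis on the simple roots alpha_{i,i+d} - 1 shows that,
   for i < j with i = j mod d, the affine root alpha_{w^-1 i, w^-1 j} + level i j
   is positive.  A matrix of I^- has entries in k[s^-1] and is lower triangular
   modulo s^-1, so it has no entry c s^e (c <> 0) at such a position: if
   wt g wt^-1 is in I^- then C is lower triangular, and a lower triangular C
   is a diagonal matrix times a product of lower root elements of L, i.e. g is
   in B_L^-.  Conversely, the same positivity puts the conjugates of the
   generators of B_L^- into the group I^-. *)

Local Notation lower := [rel i j : ordinal _ | (j <= i)%N].
Local Notation eqmod d := [rel i j : ordinal _ | (i == j %[mod d])%N].

Lemma lower_refl (n : nat) : reflexive (lower : rel 'I_n).
Proof. exact: leqnn. Qed.

Lemma lower_trans (n : nat) : transitive (lower : rel 'I_n).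
Proof. by move=> j i l /= ji lj; apply: leq_trans lj ji. Qed.

Lemma eqmod_refl (n d : nat) : reflexive (eqmod d : rel 'I_n).
Proof. by move=> i /=. Qed.

Lemma eqmod_trans (n d : nat) : transitive (eqmod d : rel 'I_n).
Proof. by move=> j i l /eqP /= ->. Qed.

Lemma eqmod_ltn_addmul (d i j : nat) : (0 < d)%N -> (i < j)%N ->
  i = j %[mod d] -> exists t, j = (i + t.+1 * d)%N.
Proof.
move=> d_gt0 ij /eqP cij.
have dvd_d : (d %| j - i)%N by rewrite -eqn_mod_dvd 1?eq_sym // ltnW.
have t_gt0 : (0 < (j - i) %/ d)%N by rewrite divn_gt0 // dvdn_leq // subn_gt0.
by exists ((j - i) %/ d).-1; rewrite prednK // divnK // subnKC // ltnW.
Qed.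

Lemma mulmx1_invmx (R : comUnitRingType) (n : nat) (A B : 'M[R]_n) :
  A *m B = 1%:M -> invmx A = B.
Proof.
move=> AB1; have [uA _] := mulmx1_unit AB1.
by rewrite -(mulKmx uA B) AB1 mulmx1.
Qed.

Lemma map_invmx_unit (R S : comUnitRingType) (f : {rmorphism R -> S}) (n : nat)
  (A : 'M[R]_n) : A \in unitmx -> map_mx f (invmx A) = invmx (map_mx f A).
Proof.
by move=> uA; symmetry; apply: mulmx1_invmx; rewrite -map_mxM mulmxV // map_mx1.
Qed.

(* Cayley-Hamilton: writing chi_A = chi_A(0) + q X, we get q(A) A = - chi_A(0). *)
Lemma invmx_horner (F : fieldType) (n : nat) (A : 'M[F]_n.+1) :
  exists p, invmx A = horner_mx A p.
Proof.
have [uA|nuA] := boolP (A \in unitmx); last first.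
  by exists 'X; rewrite invmx_out ?horner_mx_X.
set c := (char_poly A)`_0; set q := drop_poly 1 (char_poly A).
have c_neq0 : c != 0.
  by rewrite /c char_poly_det mulf_eq0 negb_or signr_eq0 -unitfE -unitmxE.
have chiE : char_poly A = c%:P + q * 'X.
  rewrite -[LHS](poly_take_drop 1) expr1; congr (_ + _).
  by apply/polyP => -[|i]; rewrite coef_take_poly coefC.
have qA_comm : horner_mx A q *m A = A *m horner_mx A q.
  by rewrite -{2 3}(horner_mx_X A) !mulmxE -!rmorphM mulrC.
have qAA : horner_mx A q *m A = - c%:M.
  apply/eqP; rewrite -addr_eq0 addrC -(horner_mx_C A) mulmxE.
  rewrite -[X in _ * X](horner_mx_X A) -rmorphM -rmorphD -chiE.
  exact/eqP/Cayley_Hamilton.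
exists ((- c^-1) *: q); rewrite linearZ /=; apply: mulmx1_invmx.
rewrite -scalemxAr -qA_comm qAA scaleNr scalerN opprK -[c%:M]scalemx1 scalerA.
by rewrite mulVf // scale1r.
Qed.

Section MatrixSupport.
Variables (R : nzRingType) (n : nat) (r : rel 'I_n).

Definition mx_supported (A : 'M[R]_n) : Prop := forall i j, ~~ r i j -> A i j = 0.

Lemma mx_supported1 : reflexive r -> mx_supported 1%:M.
Proof. by move=> r_refl i j; rewrite mxE; case: eqVneq => // ->; rewrite r_refl. Qed.

Lemma mx_supported_diag (t : 'rV[R]_n) : reflexive r -> mx_supported (diag_mx t).
Proof. by move=> r_refl i j; rewrite mxE; case: eqVneq => // ->; rewrite r_refl. Qed.

Lemma mx_supported_delta (i j : 'I_n) : r i j -> mx_supported (delta_mx i j).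
Proof.
by move=> rij x y; rewrite mxE; case: andP => // -[/eqP-> /eqP->]; rewrite rij.
Qed.

Lemma mx_supportedD A B :
  mx_supported A -> mx_supported B -> mx_supported (A + B).
Proof. by move=> sA sB i j ij; rewrite mxE sA // sB // addr0. Qed.

Lemma mx_supportedZ a A : mx_supported A -> mx_supported (a *: A).
Proof. by move=> sA i j ij; rewrite mxE sA // mulr0. Qed.

Lemma mx_supportedM A B : transitive r ->
  mx_supported A -> mx_supported B -> mx_supported (A *m B).
Proof.
move=> r_trans sA sB i j ij; rewrite mxE big1 // => l _.
have [il|/sA->] := boolP (r i l); last by rewrite mul0r.
by rewrite sB ?mulr0 //; apply: contra ij; apply: r_trans.
Qed.

End MatrixSupport.

Lemma mx_supportedV (F : fieldType) (n : nat) (r : rel 'I_n) (A : 'M[F]_n) :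
  reflexive r -> transitive r -> mx_supported r A -> mx_supported r (invmx A).
Proof.
case: n r A => [|n] r A r_refl r_trans sA; first by case.
have [p ->] := invmx_horner A.
elim/poly_ind: p => [|p c IHp]; first by rewrite rmorph0 => i j _; rewrite mxE.
rewrite rmorphD rmorphM /= horner_mx_X horner_mx_C -mulmxE -scalemx1.
apply: mx_supportedD; first exact: mx_supportedM.
exact/mx_supportedZ/mx_supported1.
Qed.

Definition elem (R : nzRingType) (n : nat) (i j : 'I_n) (x : R) : 'M[R]_n :=
  1%:M + x *: delta_mx i j.

Lemma elem_unit (R : comUnitRingType) (n : nat) (i j : 'I_n) (x : R) :
  i != j -> elem i j x \in unitmx.
Proof.
move=> ij; suff /mulmx1_unit[] : elem i j x *m elem i j (- x) = 1%:M by [].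
rewrite /elem mulmxDl mulmxDr !mul1mx mulmxDr mulmx1 -scalemxAl -scalemxAr.
by rewrite mul_delta_mx_cond eq_sym (negbTE ij) mulr0n !scaler0 addr0 scaleNr subrK.
Qed.

Lemma map_elem (R S : nzRingType) (f : {rmorphism R -> S}) (n : nat)
  (i j : 'I_n) (x : R) : map_mx f (elem i j x) = elem i j (f x).
Proof. by rewrite /elem map_mxD map_mx1 map_mxZ map_delta_mx. Qed.

Lemma elem_mul_clear (R : comNzRingType) (n : nat) (U : 'M[R]_n) (r m : 'I_n) :
  r != m -> (forall y, U m y = (y == m)%:R) ->
  U = elem r m (U r m) *m (U + (- U r m) *: delta_mx r m).
Proof.
move=> rm rowU; have deltaU : delta_mx r m *m U = delta_mx r m.
  apply/matrixP => x y; rewrite mxE (bigD1 m) //= big1 => [|l /negbTE lm]; last first.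
    by rewrite mxE lm andbF mul0r.
  by rewrite !mxE eqxx andbT rowU addr0; case: (x == r); rewrite ?mul1r ?mul0r.
rewrite /elem mulmxDl mul1mx mulmxDr -!scalemxAl deltaU -scalemxAr mul_delta_mx_cond.
by rewrite eq_sym (negbTE rm) mulr0n !scaler0 addr0 scaleNr addrNK.
Qed.

HB.instance Definition _ (k : fieldType) :=
  GRing.RMorphism.copy (@cst k) ((@FracField.tofrac _) \o (@polyC k)).

Lemma cst_comm_svarV (k : fieldType) : commr_rmorph (@cst k) (svar k)^-1.
Proof. by move=> a; apply: mulrC. Qed.

HB.instance Definition _ (k : fieldType) :=
  GRing.RMorphism.copy (@evinv k) (horner_morph (@cst_comm_svarV k)).

Section RationalFunctions.
Variable k : fieldType.
Local Notation s := (svar k).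

Lemma svar_neq0 : s != 0.
Proof. by rewrite tofrac_eq0 polyX_eq0. Qed.

Lemma evinvC (c : k) : evinv c%:P = cst c.
Proof. by rewrite /evinv map_polyC hornerC. Qed.

Lemma evinvX : evinv 'X = s^-1.
Proof. by rewrite /evinv map_polyX hornerX. Qed.

Lemma evinv_mulXn (p : {poly k}) (m : nat) : (size p <= m.+1)%N ->
  evinv p * s ^+ m = (\sum_(i < m.+1) p`_i *: 'X^(m - i))%:F.
Proof.
move=> le_p_m; rewrite /evinv (@horner_coef_wide _ m.+1); last by rewrite size_map_poly.
rewrite mulr_suml rmorph_sum; apply: eq_bigr => i _.
rewrite coef_map -mul_polyC rmorphM rmorphXn -mulrA; congr (_ * _).
rewrite -{2}(subnK (ltn_ord i : (i <= m)%N)) exprD mulrC -mulrA exprVn.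
by rewrite mulfV ?mulr1 // expf_neq0 // svar_neq0.
Qed.

Lemma evinv_inj : injective (@evinv k).
Proof.
suff evinv_eq0 (r : {poly k}) : evinv r = 0 -> r = 0.
  move=> p q eq_pq; apply/eqP; rewrite -subr_eq0; apply/eqP/evinv_eq0.
  by rewrite rmorphB /= eq_pq subrr.
move=> evinv_r0; apply/eqP; apply: contraT => r_neq0; set m := (size r).-1.
have size_r : size r = m.+1 by rewrite prednK // size_poly_gt0.
have /eqP : (\sum_(i < m.+1) r`_i *: 'X^(m - i))%:F = 0.
  by rewrite -evinv_mulXn ?size_r // evinv_r0 mul0r.
rewrite tofrac_eq0 => /eqP /(congr1 (coefp 0)) /=.
rewrite coef_sum (bigD1 ord_max) //= subnn coefZ coefXn eqxx mulr1 big1 ?addr0.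
  rewrite coef0 => r_m0.
  by move: r_neq0; rewrite -lead_coef_eq0 lead_coefE size_r r_m0 eqxx.
move=> i i_neq_max; rewrite coefZ coefXn.
suff /negbTE-> : (0 != m - i)%N by rewrite mulr0.
by move: (ltn_ord i) i_neq_max; rewrite -val_eqE /=; lia.
Qed.

Lemma expz_svar_tofrac_ge0 (f : int) (p : {poly k}) : s ^ f = p%:F -> 0 <= f.
Proof.
case: f => [//|m] eq_pf; exfalso.
have : (p * 'X^(m.+1))%:F = 1%:F.
  by rewrite rmorphM rmorphXn /= -eq_pf NegzE -exprnN mulVf ?expf_neq0 ?svar_neq0.
move/eqP; rewrite tofrac_eq => /eqP /(congr1 (coefp 0)).
by rewrite /= coefMXn coef1 => /eqP; rewrite eq_sym oner_eq0.
Qed.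

Lemma cst_svarX_evinv (c : k) (e : nat) (p : {poly k}) :
  c != 0 -> cst c * s ^+ e = evinv p -> e = 0%N /\ p`_0 = c.
Proof.
move=> c_neq0 eq_cp; have : p * 'X^e = c%:P.
  apply: evinv_inj; rewrite rmorphM rmorphXn /= evinvX evinvC -eq_cp -mulrA -exprMn.
  by rewrite mulfV ?expr1n ?mulr1 // svar_neq0.
case: e {eq_cp} => [|e] /(congr1 (coefp 0)) /=; first by rewrite mulr1 coefC.
by rewrite coefMXn coefC /= => /esym/eqP; rewrite (negbTE c_neq0).
Qed.

End RationalFunctions.

Section Conjugation.
Variables (k : fieldType) (n : nat) (x : 'M[Ks k]_n).
Hypothesis x_unit : x \in unitmx.

Lemma conjmM g h : conjm x (g *m h) = conjm x g *m conjm x h.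
Proof. by rewrite /conjm !mulmxA mulmxKV. Qed.

Lemma conjm1 : conjm x 1%:M = 1%:M.
Proof. by rewrite /conjm mulmx1 mulmxV. Qed.

Lemma conjmV g : conjm x (invmx g) = invmx (conjm x g).
Proof.
have [g_unit|g_nunit] := boolP (g \in unitmx).
  by symmetry; apply: mulmx1_invmx; rewrite -conjmM // mulmxV // conjm1.
have conj_nunit : conjm x g \notin unitmx.
  by rewrite /conjm !unitmx_mul (negbTE g_nunit) andbF.
by rewrite (invmx_out g_nunit) (invmx_out conj_nunit).
Qed.

End Conjugation.

Section AffineWeyl.
Variables (k : fieldType) (n : nat) (w : 'S_n) (lam : 'I_n -> int).
Local Notation s := (svar k).
Local Notation wt := (wtil k w lam).

Lemma wtil_mulV :
  wt *m (diag_mx (\row_i s ^ (- lam i)) *m perm_mx (w^-1)%g) = 1%:M.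
Proof.
rewrite /wtil mulmxA -[perm_mx w *m _ *m _]mulmxA.
have -> : diag_mx (\row_i s ^ lam i) *m diag_mx (\row_i s ^ (- lam i)) = 1%:M.
  apply/matrixP => i j; rewrite mul_diag_mx !mxE.
  case: eqVneq => [->|]; last by rewrite mulr0.
  by rewrite -expfzDr ?svar_neq0 // subrr.
by rewrite mulmx1 -perm_mxM mulgV perm_mx1.
Qed.

Lemma wtil_unit : wt \in unitmx.
Proof. exact: (proj1 (@mulmx1_unit (Ks k) n _ _ wtil_mulV)). Qed.

Lemma conjm_wtilE X a b :
  conjm wt X a b = s ^ lam (w a) * X (w a) (w b) * s ^ (- lam (w b)).
Proof.
rewrite /conjm (@mulmx1_invmx (Ks k) n _ _ wtil_mulV) /wtil !mulmxA.
rewrite -!(mulmxA (perm_mx w)) -row_permE -col_permE mul_mx_diag mul_diag_mx.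
by rewrite !mxE.
Qed.

Lemma conjm_wtil_rootel i j r c : conjm wt (rootel i j r c) =
  rootel ((w^-1)%g i) ((w^-1)%g j) (lam i + r - lam j) c.
Proof.
apply/matrixP => a b; rewrite conjm_wtilE !mxE (inj_eq perm_inj) !(canF_eq (permK w)).
rewrite mulrDr mulrDl; congr (_ + _).
  case: eqVneq => [->|]; last by rewrite mulr0 mul0r.
  by rewrite mulr1 -expfzDr ?svar_neq0 // subrr.
case: andP => [[/eqP-> /eqP->]|_]; last by rewrite !mulr0 mul0r.
by rewrite !permKV !mulr1 mulrCA -mulrA -!expfzDr ?svar_neq0.
Qed.

Lemma conjm_wtil_diag (t : 'I_n -> k) :
  conjm wt (diag_mx (\row_i cst (t i))) = diag_mx (\row_a cst (t (w a))).
Proof.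
apply/matrixP => a b; rewrite conjm_wtilE !mxE (inj_eq perm_inj).
case: eqVneq => [->|]; last by rewrite !mulr0n mulr0 mul0r.
by rewrite !mulr1n mulrC mulrA -expfzDr ?svar_neq0 // addNr mul1r.
Qed.

End AffineWeyl.

(* [pos_root a b e]: the affine root alpha_ab + e is positive. *)
Definition pos_root (n : nat) (a b : 'I_n) (e : int) : bool :=
  (0 < e) || ((e == 0) && (a < b)%N).

Lemma pos_rootD (n : nat) (a b c : 'I_n) (e f : int) :
  pos_root a b e -> pos_root b c f -> pos_root a c (e + f).
Proof.
rewrite /pos_root => /orP[e_gt0|/andP[/eqP-> ab]] /orP[f_gt0|/andP[/eqP-> bc]].
- by rewrite ltr_pwDl ?ltW.
- by rewrite addr0 e_gt0.
- by rewrite add0r f_gt0.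
- by rewrite addr0 eqxx (ltn_trans ab bc) orbT.
Qed.

Section IwahoriSubgroups.
Variables (k : fieldType) (n : nat).
Local Notation s := (svar k).

Lemma lower_coef0P (P : 'M[{poly k}]_n) :
  (forall i j : 'I_n, (i < j)%N -> (P i j)`_0 = 0) <->
  mx_supported lower (map_mx (horner_eval 0) P).
Proof.
split=> lowP i j ij.
  by rewrite mxE horner_evalE horner_coef0 lowP // ltnNge.
by have := lowP i j; rewrite mxE horner_evalE horner_coef0 /= -ltnNge; apply.
Qed.

Lemma Iminus1 : Iminus (1%:M : 'M[Ks k]_n).
Proof.
exists 1%:M; split; [exact: unitmx1 | by rewrite map_mx1 |].
by apply/lower_coef0P; rewrite map_mx1; apply/mx_supported1/lower_refl.
Qed.

Lemma IminusM (g h : 'M[Ks k]_n) : Iminus g -> Iminus h -> Iminus (g *m h).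
Proof.
move=> [P [P_unit -> /lower_coef0P lowP]] [Q [Q_unit -> /lower_coef0P lowQ]].
exists (P *m Q); split; [by rewrite unitmx_mul P_unit | by rewrite map_mxM |].
by apply/lower_coef0P; rewrite map_mxM; apply: mx_supportedM lowP lowQ; apply: lower_trans.
Qed.

Lemma IminusV (g : 'M[Ks k]_n) : Iminus g -> Iminus (invmx g).
Proof.
move=> [P [P_unit -> /lower_coef0P lowP]].
exists (invmx P); split; [by rewrite unitmx_inv | by rewrite map_invmx_unit |].
apply/lower_coef0P; rewrite map_invmx_unit //.
exact: mx_supportedV (@lower_refl n) (@lower_trans n) lowP.
Qed.

Lemma Iminus_diag_cst (t : 'I_n -> k) : (forall i, t i != 0) ->
  Iminus (diag_mx (\row_i cst (t i))).
Proof.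
move=> t_neq0; exists (diag_mx (\row_i (t i)%:P)); split.
- have inv_t : diag_mx (\row_i (t i)%:P) *m diag_mx (\row_i ((t i)^-1)%:P) = 1%:M.
    apply/matrixP => i j; rewrite mul_diag_mx !mxE.
    by case: eqVneq => [->|]; rewrite ?mulr0 // -polyCM mulfV.
  by case: (mulmx1_unit inv_t).
- by rewrite map_diag_mx; congr diag_mx; apply/rowP => i; rewrite !mxE; exact/esym/evinvC.
- move=> i j ij; rewrite mxE; case: eqVneq => [eq_ij|]; last by rewrite coef0.
  by rewrite eq_ij ltnn in ij.
Qed.

Lemma Iminus_rootel (a b : 'I_n) (e : int) (c : k) :
  a != b -> pos_root b a (- e) -> Iminus (rootel a b e c).
Proof.
move=> ab pos_ba; have [m e_eq] : exists m : nat, e = - m%:Z.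
  move: pos_ba; rewrite /pos_root oppr_gt0 oppr_eq0.
  by case: e => [[|m]|m] //= _; [exists 0%N | exists m.+1; rewrite NegzE].
exists (elem a b (c%:P * 'X^m)); split; first exact: elem_unit.
  by rewrite map_elem rmorphM rmorphXn /= evinvC evinvX e_eq /rootel -exprz_inv.
move=> x y xy; rewrite !mxE; case: eqVneq => [eq_xy|_]; first by rewrite eq_xy ltnn in xy.
rewrite add0r; case: andP => [[/eqP ex /eqP ey]|_]; last by rewrite mulr0 coef0.
rewrite mulr1 coefCM coefXn; case: m e_eq => [|m] e_eq; last by rewrite mulr0.
by move: pos_ba; rewrite /pos_root e_eq oppr0 ltxx eqxx -ex -ey ltnNge ltnW.
Qed.

Lemma Iplus_rootel (a b : 'I_n) (e : int) :
  a != b -> Iplus (rootel a b e (1 : k)) -> pos_root a b e.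
Proof.
move=> ab [P [eq_P _ upP]].
have eq_Pab : s ^ e = (P a b)%:F.
  move/matrixP/(_ a b): eq_P; rewrite !mxE (negbTE ab) !eqxx /= rmorph1 mul1r.
  by rewrite add0r mulr1.
have e_ge0 := expz_svar_tofrac_ge0 eq_Pab.
rewrite /pos_root lt_def e_ge0 andbT; case: eqP => //= e0.
move: eq_Pab; rewrite e0 expr0z => /esym/eqP; rewrite -tofrac1 tofrac_eq => /eqP Pab1.
rewrite ltnNge leq_eqVlt eq_sym (negbTE (ab : val a != val b)) /=.
by apply/negP => /upP; rewrite Pab1 coef1 => /eqP; rewrite oner_eq0.
Qed.

Lemma Iminus_entry_pos (g : 'M[Ks k]_n) (a b : 'I_n) (e : int) (c : k) :
  Iminus g -> pos_root a b e -> g a b = cst c * s ^ e -> c = 0.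
Proof.
move=> [P [_ -> lowP]] pos_ab eq_Pab; rewrite mxE in eq_Pab.
apply/eqP; apply: contraT => c_neq0.
case: e pos_ab eq_Pab => [m|m] pos_ab eq_Pab; last by rewrite /pos_root in pos_ab.
have [m0 Pab_c] := cst_svarX_evinv c_neq0 (esym eq_Pab).
move: pos_ab; rewrite m0 /pos_root ltxx eqxx /= => /lowP.
by rewrite Pab_c => /eqP; rewrite (negbTE c_neq0).
Qed.

End IwahoriSubgroups.

Section LeviEmbedding.
Variables (k : fieldType) (n d : nat).
Local Notation s := (svar k).
Local Notation q i := (Posz (nat_of_ord i %/ d)%N).

(* The inverse of the isomorphism of L with the pattern subgroup of GL_n(k):
   for i = j mod d, (i - j)/d = i/d - j/d. *)
Definition Lmx (C : 'M[k]_n) : 'M[Ks k]_n :=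
  \matrix_(i, j) (cst (C i j) * s ^ (q i - q j)).

Lemma LmxM (A B : 'M[k]_n) : Lmx (A *m B) = Lmx A *m Lmx B.
Proof.
apply/matrixP => i j; rewrite !mxE rmorph_sum mulr_suml; apply: eq_bigr => l _.
by rewrite !mxE rmorphM mulrACA -expfzDr ?svar_neq0 // addrA subrK.
Qed.

Lemma Lmx1 : Lmx 1%:M = 1%:M.
Proof.
apply/matrixP => i j; rewrite !mxE; case: eqVneq => [->|_].
  by rewrite subrr expr0z mulr1 rmorph1.
by rewrite rmorph0 mul0r.
Qed.

Lemma LmxV (C : 'M[k]_n) : C \in unitmx -> invmx (Lmx C) = Lmx (invmx C).
Proof. by move=> C_unit; apply: mulmx1_invmx; rewrite -LmxM mulmxV // Lmx1. Qed.

Lemma Lmx_diag (t : 'I_n -> k) :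
  Lmx (diag_mx (\row_i t i)) = diag_mx (\row_i cst (t i)).
Proof.
apply/matrixP => i j; rewrite !mxE; case: eqVneq => [->|_].
  by rewrite subrr expr0z !mulr1n mulr1.
by rewrite !mulr0n rmorph0 mul0r.
Qed.

Hypothesis d_gt0 : (0 < d)%N.

Lemma Lexp_eqmod (i j : 'I_n) : eqmod d i j -> Lexp d i j = q i - q j.
Proof.
move=> /eqP ij; rewrite /Lexp (_ : i%:Z - j%:Z = (q i - q j) * d%:Z).
  by rewrite mulzK // eqz_nat -lt0n.
rewrite {1}(divn_eq i d) {1}(divn_eq j d) ij !PoszD !PoszM; ring.
Qed.

Lemma Lmx_elem (i j : 'I_n) (a : k) : eqmod d i j ->
  Lmx (elem i j a) = rootel i j (Lexp d i j) a.
Proof.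
move=> ij; rewrite /rootel Lexp_eqmod //; apply/matrixP => x y.
rewrite !mxE rmorphD rmorphM !rmorph_nat mulrDl.
congr (_ + _); first by case: eqVneq => [->|]; rewrite ?subrr ?expr0z ?mulr1 ?mul0r.
by case: andP => [[/eqP-> /eqP->]|_]; rewrite ?mulr0 ?mul0r // !mulr1.
Qed.

Lemma Lgrp_Lmx (g : 'M[Ks k]_n) : Lgrp d g ->
  exists C, [/\ C \in unitmx, mx_supported (eqmod d) C & g = Lmx C].
Proof.
elim=> [| h [[t [t_neq0 ->]] | [i [j [a [ij cij ->]]]]]
      | g1 g2 _ [C1 [C1_unit pC1 ->]] _ [C2 [C2_unit pC2 ->]]
      | g1 _ [C [C_unit pC ->]]].
- by exists 1%:M; split; [exact: unitmx1 | exact/mx_supported1/eqmod_refl | rewrite Lmx1].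
- exists (diag_mx (\row_i t i)); split; last by rewrite Lmx_diag.
    rewrite unitmxE det_diag unitfE prodf_seq_neq0.
    by apply/allP => i _; rewrite mxE t_neq0.
  exact/mx_supported_diag/eqmod_refl.
- exists (elem i j a); split; [exact: elem_unit | | by rewrite Lmx_elem].
  apply: mx_supportedD; first exact/mx_supported1/eqmod_refl.
  exact/mx_supportedZ/mx_supported_delta.
- exists (C1 *m C2); split; [by rewrite unitmx_mul C1_unit | | by rewrite LmxM].
  exact: mx_supportedM (@eqmod_trans n d) pC1 pC2.
- exists (invmx C); split; [by rewrite unitmx_inv | | by rewrite LmxV].
  exact: mx_supportedV (@eqmod_refl n d) (@eqmod_trans n d) pC.
Qed.

End LeviEmbedding.

Section RootPositivity.
Variables (k : fieldType) (n d : nat) (w : 'S_n) (lam : 'I_n -> int).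
Hypothesis d_gt0 : (0 < d)%N.
Hypothesis simple_pos :
  forall i j : 'I_n, nat_of_ord j = (i + d)%N -> wpos (wtil k w lam) i j (-1).
Local Notation s := (svar k).
Local Notation wt := (wtil k w lam).
Local Notation q i := (Posz (nat_of_ord i %/ d)%N).
Local Notation level i j := (lam i - lam j + (q i - q j)).

Lemma simple_root_pos (i m : 'I_n) : nat_of_ord m = (i + d)%N ->
  pos_root ((w^-1)%g i) ((w^-1)%g m) (level i m).
Proof.
move=> m_eq; have im : (w^-1)%g i != (w^-1)%g m.
  by rewrite (inj_eq perm_inj) -val_eqE /= m_eq; lia.
have := simple_pos m_eq 1; rewrite conjm_wtil_rootel => /(Iplus_rootel im).
have q_m : q m = q i + 1 by rewrite m_eq divnDr ?dvdnn // divnn d_gt0 PoszD.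
by rewrite q_m (_ : lam i + -1 - lam m = lam i - lam m + (q i - (q i + 1))) //; ring.
Qed.

Lemma Lroot_pos (i j : 'I_n) : (i < j)%N -> eqmod d i j ->
  pos_root ((w^-1)%g i) ((w^-1)%g j) (level i j).
Proof.
move=> ij /eqP cij; have [t j_eq] := eqmod_ltn_addmul d_gt0 ij cij.
elim: t i j_eq {ij cij} => [|t IHt] i j_eq.
  by apply: simple_root_pos; rewrite j_eq mul1n.
have m_lt : (i + d < n)%N by rewrite (leq_ltn_trans _ (ltn_ord j)) // j_eq; lia.
pose m := Ordinal m_lt.
rewrite (_ : level i j = level i m + level m j); last by ring.
apply: pos_rootD (@simple_root_pos i m erefl) (IHt m _).
by rewrite j_eq mulSn addnA.
Qed.

Lemma Iminus_conj_Lmx_lower (C : 'M[k]_n) : mx_supported (eqmod d) C ->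
  Iminus (conjm wt (Lmx d C)) -> mx_supported lower C.
Proof.
move=> pC I_C i j; rewrite /= -ltnNge => ij.
have [cij|/pC//] := boolP (eqmod d i j).
apply: (Iminus_entry_pos I_C (Lroot_pos ij cij)).
rewrite conjm_wtilE !permKV mxE mulrCA -mulrA -!expfzDr ?svar_neq0 //.
by congr (_ * s ^ _); ring.
Qed.

Lemma BLgens_conj_Iminus (g : 'M[Ks k]_n) : BLgens d g -> Iminus (conjm wt g).
Proof.
case=> [[t [t_neq0 ->]]|[i [j [a [ji cij ->]]]]].
  by rewrite conjm_wtil_diag; apply: Iminus_diag_cst.
rewrite conjm_wtil_rootel; apply: Iminus_rootel.
  by rewrite (inj_eq perm_inj) -val_eqE /= gtn_eqF.
have cji : eqmod d j i by rewrite /= eq_sym.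
by rewrite Lexp_eqmod //; congr pos_root: (Lroot_pos ji cji); ring.
Qed.

End RootPositivity.

Section LowerGeneration.
Variables (k : fieldType) (n d : nat).
Hypothesis d_gt0 : (0 < d)%N.

Definition lower_nz (U : 'M[k]_n) : {set 'I_n * 'I_n} :=
  [set p : 'I_n * 'I_n | (p.2 < p.1)%N && (U p.1 p.2 != 0)].

Lemma unitriangular_eq1 (U : 'M[k]_n) : mx_supported lower U ->
  (forall i, U i i = 1) -> lower_nz U = set0 -> U = 1%:M.
Proof.
move=> lowU diagU nzU; apply/matrixP => x y; rewrite mxE.
case: (ltngtP x y) => [xy|yx|/val_inj->]; last by rewrite eqxx diagU.
  by rewrite lowU -?ltnNge // -val_eqE /= ltn_eqF.
have := in_set0 (x, y); rewrite -nzU inE /= yx /= => /negbT; rewrite negbK => /eqP->.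
by rewrite -val_eqE /= gtn_eqF.
Qed.

Lemma unitriangular_pivot (U : 'M[k]_n) : mx_supported lower U ->
  (forall i, U i i = 1) -> lower_nz U != set0 ->
  exists r m : 'I_n, [/\ (m < r)%N, U r m != 0 & forall y, U m y = (y == m)%:R].
Proof.
move=> lowU diagU /set0Pn[p0 p0U].
have [[r m] rmU min_m] :=
  @arg_minnP _ p0 (fun p => p \in lower_nz U) (fun p => nat_of_ord p.2) p0U.
move: rmU; rewrite inE /= => /andP[mr u_neq0]; exists r, m; split=> // y.
case: (ltngtP y m) => [ym|my|/val_inj->]; last by rewrite eqxx diagU.
  rewrite -val_eqE /= ltn_eqF //; apply/eqP; apply: contraT => nz_my.
  by have := min_m (m, y); rewrite inE /= ym nz_my leqNgt ym => /(_ isT).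
by rewrite lowU -?ltnNge // -val_eqE /= gtn_eqF.
Qed.

Lemma lower_nz_clear (U : 'M[k]_n) (r m : 'I_n) :
  lower_nz (U + (- U r m) *: delta_mx r m) = lower_nz U :\ (r, m).
Proof.
apply/setP => -[x y]; rewrite !inE !mxE /= xpair_eqE.
case: (x =P r) => [->|_]; case: (y =P m) => [->|_] /=;
  by rewrite ?mulr0 ?addr0 ?mulr1 ?subrr ?eqxx ?andbF.
Qed.

Lemma unitriangular_BLminus (U : 'M[k]_n) : mx_supported lower U ->
  mx_supported (eqmod d) U -> (forall i, U i i = 1) -> BLminus d (Lmx d U).
Proof.
have [N] := ubnP #|lower_nz U|; elim: N U => // N IHN U size_U lowU eqmodU diagU.
have [nzU|/(unitriangular_pivot lowU diagU)[r [m [mr u_neq0 rowU]]]] :=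
  eqVneq (lower_nz U) set0.
  by rewrite (unitriangular_eq1 lowU diagU nzU) Lmx1; apply: gen_one.
have rm : r != m by rewrite -val_eqE /= gtn_eqF.
have crm : eqmod d r m by apply: contraNT u_neq0 => /eqmodU->.
rewrite (elem_mul_clear rm rowU) LmxM; apply: gen_mul.
  by apply: gen_in; right; exists r, m, (U r m); rewrite Lmx_elem.
apply: IHN.
- by move: size_U; rewrite lower_nz_clear (cardsD1 (r, m)) inE /= mr u_neq0.
- by apply: mx_supportedD lowU _; apply/mx_supportedZ/mx_supported_delta/ltnW.
- by apply: mx_supportedD eqmodU _; apply/mx_supportedZ/mx_supported_delta.
- move=> i; rewrite !mxE diagU; case: (i =P r) => [->|_]; last by rewrite mulr0 addr0.
  by rewrite (negbTE rm) mulr0 addr0.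
Qed.

Lemma lower_BLminus (C : 'M[k]_n) : C \in unitmx ->
  mx_supported lower C -> mx_supported (eqmod d) C -> BLminus d (Lmx d C).
Proof.
move=> C_unit lowC eqmodC.
have C_trig : is_trig_mx C.
  by apply/is_trig_mxP => x y xy; apply: lowC; rewrite /= -ltnNge.
have C_diag i : C i i != 0.
  move: C_unit; rewrite unitmxE det_trig // unitfE prodf_seq_neq0.
  by move=> /allP /(_ i (mem_index_enum i)).
pose D := diag_mx (\row_i (C i i)^-1).
have -> : C = diag_mx (\row_i C i i) *m (D *m C).
  by apply/matrixP => x y; rewrite !mul_diag_mx !mxE mulrA mulfV ?mul1r.
rewrite LmxM Lmx_diag; apply: gen_mul.
  by apply: gen_in; left; exists (fun i => C i i).
apply: unitriangular_BLminus.
- exact: mx_supportedM (@lower_trans n) (mx_supported_diag _ (@lower_refl n)) lowC.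
- exact: mx_supportedM (@eqmod_trans n d) (mx_supported_diag _ (@eqmod_refl n d)) eqmodC.
- by move=> i; rewrite mul_diag_mx !mxE mulVf.
Qed.

End LowerGeneration.

Lemma BLgens_Lgens (k : fieldType) (n d : nat) (g : 'M[Ks k]_n) :
  BLgens d g -> Lgens d g.
Proof.
case=> [torus_g|[i [j [a [ji cij ->]]]]]; [by left | right].
by exists i, j, a; split; rewrite // -val_eqE /= gtn_eqF.
Qed.

Theorem lemma10p3 (k : fieldType) (n d : nat) (hd0 : (0 < d)%N) (hdn : (d <= n)%N)
  (w : 'S_n) (lam : 'I_n -> int) :
  (* wt alpha > 0 for every alpha = alpha_{i,i+d} - 1 in Delta(L) *)
  (forall i j : 'I_n, nat_of_ord j = (i + d)%N -> wpos (wtil k w lam) i j (-1)) ->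
  (* L ∩ wt^-1 I^- wt = B_L^- *)
  forall g : 'M[Ks k]_n,
    (Lgrp d g /\ Iminus (conjm (wtil k w lam) g)) <-> BLminus d g.
Proof.
move=> simple_pos g; have wt_unit := wtil_unit k w lam; split.
  case=> /(Lgrp_Lmx hd0) [C [C_unit eqmodC ->]] I_C.
  apply: (lower_BLminus hd0 C_unit _ eqmodC).
  exact: (Iminus_conj_Lmx_lower hd0 simple_pos eqmodC).
elim=> [|h BLh|g1 g2 _ [L1 I1] _ [L2 I2]|g1 _ [L1 I1]].
- by split; [exact: gen_one | rewrite conjm1 //; apply: Iminus1].
- split; first by apply: gen_in; apply: BLgens_Lgens.
  exact: (BLgens_conj_Iminus hd0 simple_pos).
- by split; [exact: gen_mul | rewrite conjmM //; apply: IminusM].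
- by split; [exact: gen_inv | rewrite conjmV //; apply: IminusV].
Qed.
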